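(* Let $R$ be a multiplication ring with finitely many minimal prime ideals and let $M$ be a multiplication $R$-module. Then: (1) the endomorphism ring $\mathrm{End}_R(M)$ is a multiplication ring; (2) $\mathrm{End}_R(M)\cong R/\mathrm{ann}_R(M)$; (3) $M$ is a faithful multiplication $\mathrm{End}_R(M)$-module.
   Context: All rings are commutative with $1$ and all modules are unital. A ring $R$ is a multiplication ring if whenever $I,J$ are ideals of $R$ with $J\subseteq I$, there is an ideal $I'$ of $R$ with $J=I'I$. An $R$-module $M$ is a multiplication module if every submodule of $M$ equals $IM$ for some ideal $I$ of $R$. $\mathrm{ann}_R(M)=\{r\in R: rM=0\}$; a module is faithful if its annihilator is zero. *)

From HB Require Import structures.
From mathcomp Require Import all_boot all_order all_algebra.
From mathcomp Require Import boolp.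
From Stdlib Require Import FunctionalExtensionality ProofIrrelevance.

Set Implicit Arguments.
Unset Strict Implicit.
Unset Printing Implicit Defensive.

Import GRing.Theory.
Local Open Scope ring_scope.

Section Ideals.
Variable R : pzRingType.

Definition is_ideal (I : R -> Prop) : Prop :=
  [/\ I 0,
      (forall x y, I x -> I y -> I (x + y)),
      (forall r x, I x -> I (r * x)) &
      (forall r x, I x -> I (x * r))].

Definition ideal_mul (I J : R -> Prop) : R -> Prop :=
  fun x => forall K : R -> Prop, is_ideal K ->
    (forall a b, I a -> J b -> K (a * b)) -> K x.

Definition multiplication_ring : Prop :=
  forall I J : R -> Prop, is_ideal I -> is_ideal J ->
    (forall x, J x -> I x) ->
    exists I' : R -> Prop, is_ideal I' /\ (forall x, J x <-> ideal_mul I' I x).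

Definition prime_ideal (P : R -> Prop) : Prop :=
  [/\ is_ideal P, ~ P 1 & forall a b, P (a * b) -> P a \/ P b].

Definition minimal_prime (P : R -> Prop) : Prop :=
  prime_ideal P /\
  forall Q : R -> Prop, prime_ideal Q -> (forall x, Q x -> P x) ->
    forall x, P x -> Q x.

Definition finitely_many_minimal_primes : Prop :=
  exists (n : nat) (Ps : nat -> R -> Prop),
    forall P, minimal_prime P ->
      exists i, (i < n)%N /\ forall x, P x <-> Ps i x.

End Ideals.

Section Modules.
Variables (R : pzRingType) (V : lmodType R).

Definition is_submodule (N : V -> Prop) : Prop :=
  [/\ N 0,
      (forall x y, N x -> N y -> N (x + y)) &
      (forall (r : R) x, N x -> N (r *: x))].

Definition ideal_smul (I : R -> Prop) : V -> Prop :=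
  fun m => forall N : V -> Prop, is_submodule N ->
    (forall r v, I r -> N (r *: v)) -> N m.

Definition multiplication_module : Prop :=
  forall N : V -> Prop, is_submodule N ->
    exists I : R -> Prop, is_ideal I /\ (forall m, N m <-> ideal_smul I m).

Definition ann : R -> Prop := fun r => forall v : V, r *: v = 0.

Definition faithful : Prop := forall r : R, ann r -> r = 0.

End Modules.

(* S ≅ R / I, expressed via the first isomorphism theorem: there is a
   surjective ring morphism R -> S whose kernel is exactly I. *)
Definition iso_to_quotient (R S : pzRingType) (I : R -> Prop) : Prop :=
  exists f : {rmorphism R -> S},
    (forall s : S, exists r : R, f r = s) /\ (forall r, f r = 0 <-> I r).

Section Endo.
Variables (R : comPzRingType) (M : lmodType R).

Record endo := Endo {
  efun :> M -> M;
  efunD : forall x y, efun (x + y) = efun x + efun y;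
  efunZ : forall (r : R) x, efun (r *: x) = r *: efun x }.

Lemma endo_ext (f g : endo) : (forall x, f x = g x) -> f = g.
Proof.
case: f => f fD fZ; case: g => g gD gZ /= H.
have E : f = g by apply: functional_extensionality.
subst g; congr Endo; apply: proof_irrelevance.
Qed.

Definition endo_zero : endo.
Proof. refine (@Endo (fun _ => 0) _ _); by move=> *; rewrite ?addr0 ?scaler0. Defined.

Definition endo_add (f g : endo) : endo.
Proof.
refine (@Endo (fun x => f x + g x) _ _).
- by move=> x y; rewrite !efunD addrACA.
- by move=> r x; rewrite !efunZ scalerDr.
Defined.

Definition endo_opp (f : endo) : endo.
Proof.
refine (@Endo (fun x => - f x) _ _).
- by move=> x y; rewrite efunD opprD.
- by move=> r x; rewrite efunZ scalerN.
Defined.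

Definition endo_one : endo.
Proof. by refine (@Endo id _ _). Defined.

Definition endo_mul (f g : endo) : endo.
Proof.
refine (@Endo (fun x => f (g x)) _ _).
- by move=> x y; rewrite !efunD.
- by move=> r x; rewrite !efunZ.
Defined.

Definition End_R : Type := endo.

HB.instance Definition _ := gen_eqMixin End_R.
HB.instance Definition _ := gen_choiceMixin End_R.

Lemma endo_addA : associative (endo_add : End_R -> _ -> _).
Proof. by move=> f g h; apply: endo_ext => x /=; rewrite addrA. Qed.
Lemma endo_addC : commutative (endo_add : End_R -> _ -> _).
Proof. by move=> f g; apply: endo_ext => x /=; rewrite addrC. Qed.
Lemma endo_add0 : left_id (endo_zero : End_R) endo_add.
Proof. by move=> f; apply: endo_ext => x /=; rewrite add0r. Qed.
Lemma endo_addN : left_inverse (endo_zero : End_R) endo_opp endo_add.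
Proof. by move=> f; apply: endo_ext => x /=; rewrite addNr. Qed.

HB.instance Definition _ :=
  GRing.isZmodule.Build End_R endo_addA endo_addC endo_add0 endo_addN.

Definition endo_mulE : End_R -> End_R -> End_R := endo_mul.
Lemma endo_mulA : associative endo_mulE.
Proof. by move=> f g h; apply: endo_ext. Qed.
Lemma endo_mul1 : left_id (endo_one : End_R) endo_mulE.
Proof. by move=> f; apply: endo_ext. Qed.
Lemma endo_mulr1 : right_id (endo_one : End_R) endo_mulE.
Proof. by move=> f; apply: endo_ext. Qed.
Lemma endo_mulDl : left_distributive endo_mulE (@GRing.add End_R).
Proof. by move=> f g h; apply: endo_ext. Qed.
Lemma endo_mulDr : right_distributive endo_mulE (@GRing.add End_R).
Proof. by move=> f g h; apply: endo_ext => x /=; rewrite /endo_mulE /= efunD. Qed.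

HB.instance Definition _ := GRing.Zmodule_isPzRing.Build End_R
  endo_mulA endo_mul1 endo_mulr1 endo_mulDl endo_mulDr.

(* M regarded as a (left) End_R(M)-module via evaluation: f . m := f m. *)
Definition M_over_End : Type := M.
HB.instance Definition _ := GRing.Zmodule.on M_over_End.

Definition evalEnd (f : End_R) (m : M_over_End) : M_over_End := efun f m.

Lemma evalEndA (f g : End_R) (m : M_over_End) :
  evalEnd f (evalEnd g m) = evalEnd (f * g) m.
Proof. by []. Qed.
Lemma evalEnd1 : left_id (1 : End_R) evalEnd.
Proof. by []. Qed.
Lemma evalEndDr : right_distributive evalEnd +%R.
Proof. by move=> f x y; rewrite /evalEnd efunD. Qed.
Lemma evalEndDl (m : M_over_End) :
  {morph evalEnd^~ m : f g / f + g}.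
Proof. by []. Qed.

HB.instance Definition _ := GRing.Zmodule_isLmodule.Build End_R M_over_End
  evalEndA evalEnd1 evalEndDr evalEndDl.

End Endo.

From HB Require Import structures.
From mathcomp Require Import all_boot all_order all_algebra.
From mathcomp Require Import boolp classical_sets.
From mathcomp Require Import ring.

(* Every R-endomorphism f of M is a scalar multiplication.  Let T be the ideal
   of those t for which x |-> f (t x) is a scalar multiplication.  Writing each
   cyclic submodule as R x = I_x M, one gets I_x <= T, hence M = T M and
   x = t x for some t in T; R being a multiplication ring, every element of
   ann(M) and of each I_x is then of the form r = t r with t in T.  If T were
   proper it would lie in a prime Q, and all these r would vanish in R_Q.  With
   finitely many minimal primes there is t0 outside Q killing the kernel of
   R -> R_Q, so t0 M = 0 and t0 in ann(M) <= T <= Q, a contradiction.  Hence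
   R -> End_R(M) is onto with kernel ann(M); a quotient of a multiplication ring
   is a multiplication ring, and an End_R(M)-submodule N of M is J M for
   J = {g | g M <= N}. *)

Set Implicit Arguments.
Unset Strict Implicit.
Unset Printing Implicit Defensive.
Import GRing.Theory.
Local Open Scope classical_set_scope.
Local Open Scope ring_scope.

Section IdealProduct.
Variable R : pzRingType.
Implicit Types I J K : set R.

Lemma is_ideal_mul I J : is_ideal (ideal_mul I J).
Proof.
split=> [K [] //|x y Hx Hy K HK g|r x Hx K HK g|r x Hx K HK g]; case: (HK) => _ KD KL KR.
- exact: KD (Hx K HK g) (Hy K HK g).
- exact: KL (Hx K HK g).
- exact: KR (Hx K HK g).
Qed.

Lemma ideal_mul_prod I J a b : I a -> J b -> ideal_mul I J (a * b).
Proof. by move=> Ia Jb K _; apply. Qed.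

Lemma ideal_mul_least I J K : is_ideal K ->
  (forall a b, I a -> J b -> K (a * b)) -> ideal_mul I J `<=` K.
Proof. by move=> HK g x; apply. Qed.

End IdealProduct.

Section IdealMorphism.
Variables (R S : pzRingType) (f : {rmorphism R -> S}).

Lemma is_ideal_preimage (J : set S) : is_ideal J -> is_ideal (f @^-1` J).
Proof.
case=> J0 JD JL JR; split=> /=; rewrite ?rmorph0 // => x y; rewrite ?rmorphD ?rmorphM.
- exact: JD.
- exact: JL.
- exact: JR.
Qed.

Hypothesis f_surj : forall s, exists r, f r = s.

Lemma is_ideal_image (I : set R) : is_ideal I -> is_ideal (f @` I).
Proof.
case=> I0 ID IL IR; split.
- by exists 0; rewrite ?rmorph0.
- by move=> _ _ [x Ix <-] [y Iy <-]; exists (x + y); rewrite ?rmorphD //; apply: ID.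
- move=> s _ [x Ix <-]; have [r <-] := f_surj s.
  by exists (r * x); rewrite ?rmorphM //; apply: IL.
- move=> s _ [x Ix <-]; have [r <-] := f_surj s.
  by exists (x * r); rewrite ?rmorphM //; apply: IR.
Qed.

Lemma multiplication_ring_surj : multiplication_ring R -> multiplication_ring S.
Proof.
move=> HR I J HI HJ JI.
have [X [HX EX]] := HR _ _ (is_ideal_preimage HI) (is_ideal_preimage HJ) (fun r => JI (f r)).
exists (f @` X); split; first exact: is_ideal_image.
move=> g; have [r <-] := f_surj g; split.
- move/EX; apply: (ideal_mul_least (is_ideal_preimage (is_ideal_mul _ _))) => x i Xx Ii /=.
  by rewrite rmorphM; apply: ideal_mul_prod => //; exists x.
- apply: ideal_mul_least => // _ b [x Xx <-] Ib; have [s Es] := f_surj b.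
  by rewrite -Es -rmorphM; apply/EX; apply: ideal_mul_prod; rewrite //= Es.
Qed.

End IdealMorphism.

Section SubmoduleProduct.
Variables (R : pzRingType) (V : lmodType R).
Implicit Types I : set R.

Lemma is_submodule_ideal_smul I : is_submodule (@ideal_smul _ V I).
Proof.
split=> [N [] //|x y Hx Hy N HN g|r x Hx N HN g]; case: (HN) => _ ND NZ.
- exact: ND (Hx N HN g) (Hy N HN g).
- exact: NZ (Hx N HN g).
Qed.

Lemma ideal_smul_gen I r (v : V) : I r -> ideal_smul I (r *: v).
Proof. by move=> Ir N _; apply. Qed.

Lemma ideal_smul_least I (N : set V) : is_submodule N ->
  (forall r v, I r -> N (r *: v)) -> ideal_smul I `<=` N.
Proof. by move=> HN g m; apply. Qed.

End SubmoduleProduct.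

Section CommutativeIdeals.
Variable R : comPzRingType.
Implicit Types A B I J K X : set R.

Definition principal (p : R) : set R := [set x | exists r, x = r * p].

Definition fixed_by A (p : R) : Prop := exists2 a, A a & p = a * p.

Lemma ideal_mulSS I I' J J' : I `<=` I' -> J `<=` J' ->
  ideal_mul I J `<=` ideal_mul I' J'.
Proof.
move=> II' JJ'; apply: ideal_mul_least; first exact: is_ideal_mul.
by move=> a b Ia Jb; apply: ideal_mul_prod; [apply: II' | apply: JJ'].
Qed.

Lemma ideal_mulA_sub I J K :
  ideal_mul I (ideal_mul J K) `<=` ideal_mul (ideal_mul I J) K.
Proof.
have [IJK0 IJKD IJKL IJKR] := is_ideal_mul (ideal_mul I J) K.
apply: ideal_mul_least; first exact: is_ideal_mul.
move=> x y Ix; apply: (@ideal_mul_least _ _ _ [set z | ideal_mul (ideal_mul I J) K (x * z)]).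
  split=> [|u v Hu Hv|r u Hu|r u Hu] /=.
  - by rewrite mulr0.
  - by rewrite mulrDr; apply: IJKD.
  - by rewrite mulrCA; apply: IJKL.
  - by rewrite mulrA; apply: IJKR.
by move=> j k Jj Kk; rewrite /= mulrA; apply: ideal_mul_prod => //; apply: ideal_mul_prod.
Qed.

Lemma is_ideal_principal p : is_ideal (principal p).
Proof.
split.
- by exists 0; rewrite mul0r.
- by move=> _ _ [r ->] [s ->]; exists (r + s); rewrite mulrDl.
- by move=> r _ [s ->]; exists (r * s); rewrite mulrA.
- by move=> r _ [s ->]; exists (s * r); rewrite mulrAC.
Qed.

Lemma principal_self p : principal p p.
Proof. by exists 1; rewrite mul1r. Qed.

Lemma principal_sub I p : is_ideal I -> I p -> principal p `<=` I.
Proof. by case=> _ _ IL _ Ip _ [r ->]; apply: IL. Qed.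

Lemma ideal_mul_principal A p : is_ideal A ->
  ideal_mul (principal p) A `<=` [set a * p | a in A].
Proof.
case=> A0 AD AL AR; apply: ideal_mul_least.
  split.
  - by exists 0; rewrite ?mul0r.
  - by move=> _ _ [a Aa <-] [b Ab <-]; exists (a + b); [apply: AD | rewrite mulrDl].
  - by move=> r _ [a Aa <-]; exists (r * a); [apply: AL | rewrite mulrA].
  - by move=> r _ [a Aa <-]; exists (a * r); [apply: AR | rewrite mulrAC].
by move=> _ a [r ->] Aa; exists (r * a); [apply: AL | rewrite mulrAC].
Qed.

Lemma ideal_subB I x y : is_ideal I -> I x -> I y -> I (x - y).
Proof. by case=> _ ID IL _ Ix Iy; apply: ID => //; rewrite -mulN1r; apply: IL. Qed.

Lemma ideal_1B I a : is_ideal I -> ~ I 1 -> I a -> ~ I (1 - a).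
Proof. by case=> _ ID _ _ I1 Ia /(ID _ _)/(_ Ia); rewrite subrK. Qed.

Lemma is_ideal0 : is_ideal [set 0 : R].
Proof.
split=> //= [x y -> ->|r x ->|r x ->]; by rewrite ?addr0 ?mulr0 ?mul0r.
Qed.

Definition ideal_add A B : set R := [set a + b | a in A & b in B].

Lemma is_ideal_add A B : is_ideal A -> is_ideal B -> is_ideal (ideal_add A B).
Proof.
case=> A0 AD AL AR [B0 BD BL BR]; split.
- by exists 0 => //; exists 0; rewrite ?addr0.
- move=> _ _ [a Aa [b Bb <-]] [a' Aa' [b' Bb' <-]].
  by exists (a + a'); [apply: AD | exists (b + b'); [apply: BD | rewrite addrACA]].
- move=> r _ [a Aa [b Bb <-]].
  by exists (r * a); [apply: AL | exists (r * b); [apply: BL | rewrite mulrDr]].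
- move=> r _ [a Aa [b Bb <-]].
  by exists (a * r); [apply: AR | exists (b * r); [apply: BR | rewrite mulrDl]].
Qed.

Lemma ideal_addl A B : is_ideal B -> A `<=` ideal_add A B.
Proof. by case=> B0 _ _ _ a Aa; exists a => //; exists 0; rewrite ?addr0. Qed.

Lemma ideal_addr A B : is_ideal A -> B `<=` ideal_add A B.
Proof. by case=> A0 _ _ _ b Bb; exists 0 => //; exists b; rewrite ?add0r. Qed.

End CommutativeIdeals.

Section PrimeIdeals.
Variable R : comPzRingType.
Implicit Types I P Q S : set R.

Lemma is_ideal_bigcup (G : set (set R)) : G !=set0 -> total_on G subset ->
  (forall X, G X -> is_ideal X) -> is_ideal (\bigcup_(X in G) X).
Proof.
move=> [X0 GX0] Gtot GI; split.
- by exists X0 => //; case: (GI _ GX0).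
- move=> x y [X GX Xx] [Y GY Yy].
  have [XY|YX] := Gtot _ _ GX GY; [exists Y | exists X] => //.
  + by case: (GI _ GY) => _ YD _ _; apply: YD => //; apply: XY.
  + by case: (GI _ GX) => _ XD _ _; apply: XD => //; apply: YX.
- by move=> r x [X GX Xx]; exists X => //; case: (GI _ GX) => _ _ XL _; apply: XL.
- by move=> r x [X GX Xx]; exists X => //; case: (GI _ GX) => _ _ _ XR; apply: XR.
Qed.

Lemma prime_ideal_bigcap (G : set (set R)) : G !=set0 -> total_on G subset ->
  (forall P, G P -> prime_ideal P) -> prime_ideal (\bigcap_(P in G) P).
Proof.
move=> [P0 GP0] Gtot GP; split.
- split=> [P /GP[[]]//|x y Hx Hy P GPP|r x Hx P GPP|r x Hx P GPP];
    have [[_ PD PL PR] _ _] := GP P GPP.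
  + exact: PD (Hx P GPP) (Hy P GPP).
  + exact: PL (Hx P GPP).
  + exact: PR (Hx P GPP).
- by move=> /(_ P0 GP0); case: (GP P0 GP0).
move=> a b Hab; apply: contrapT => /not_orP[].
move=> /existsNP[P1 /not_implyP[GP1 P1a]] /existsNP[P2 /not_implyP[GP2 P2b]].
have [_ _ PM1] := GP P1 GP1; have [_ _ PM2] := GP P2 GP2.
have [P12|P21] := Gtot _ _ GP1 GP2.
- by case: (PM1 _ _ (Hab P1 GP1)) => // /P12.
- by case: (PM2 _ _ (Hab P2 GP2)) => // /P21.
Qed.

Definition maximal_avoiding S Q : Prop :=
  [/\ is_ideal Q, (forall s, S s -> ~ Q s) &
      forall a, ~ Q a -> exists2 s, S s & ideal_add Q (principal a) s].

Lemma exists_maximal_avoiding S I : is_ideal I -> (forall s, S s -> ~ I s) ->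
  exists2 Q, I `<=` Q & maximal_avoiding S Q.
Proof.
move=> HI IS.
(* Zorn's lemma is applied to the sets X such that I `|` X is an ideal avoiding
   S: unlike those ideals themselves, they include set0, the union of the empty
   chain. *)
pose good X := is_ideal (I `|` X) /\ forall s, S s -> ~ (I `|` X) s.
have [A [[HA AS] Amax]] : exists A, good A /\ forall B, A `<` B -> ~ good B.
  apply: Zorn_bigcup => F Fgood Fchain.
  pose G := I |` [set I `|` X | X in F].
  have GI Z : G Z -> is_ideal Z /\ forall s, S s -> ~ Z s.
    by case=> [->|[X FX <-]]; last apply: Fgood.
  have EG : I `|` \bigcup_(X in F) X = \bigcup_(Z in G) Z.
    apply/seteqP; split=> x.
    - case=> [Ix|[X FX Xx]]; first by exists I => //; left.
      by exists (I `|` X); [right; exists X | right].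
    - case=> Z [->|[X FX <-]]; [left | case=> ?; [left | right; exists X]] => //.
  rewrite /good EG; split.
  - apply: is_ideal_bigcup; first by exists I; left.
      move=> Z1 Z2 [->|[X1 FX1 <-]] [->|[X2 FX2 <-]];
        try by [left | left; apply: subsetUl | right; apply: subsetUl].
      by case: (Fchain _ _ FX1 FX2) => [X12|X21]; [left | right]; apply: setUS.
    by move=> Z /GI[].
  - by move=> s Ss [Z /GI[_ /(_ s Ss)]].
exists (I `|` A); first exact: subsetUl.
split=> // a Qa; apply: contrapT => noS.
pose B := ideal_add (I `|` A) (principal a).
have HB : is_ideal B by apply/is_ideal_add/is_ideal_principal.
have QB : I `|` A `<=` B by apply: ideal_addl; apply: is_ideal_principal.
apply: (Amax B).
  split=> [x Ax|BA]; first by apply: QB; right.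
  apply: Qa; right; apply: BA; exists 0; first by case: HA.
  by exists a; rewrite ?add0r //; apply: principal_self.
have IB : I `<=` B by move=> x Ix; apply: QB; left.
by rewrite /good (setUidPr _ _).2 //; split=> // s Ss Bs; apply: noS; exists s.
Qed.

Lemma maximal_avoiding_prime S Q : S 1 ->
  (forall a b, S a -> S b -> S (a * b)) -> maximal_avoiding S Q -> prime_ideal Q.
Proof.
move=> S1 SM [HQ QS Qmax]; split=> // [/(QS _ S1)//|a b Qab].
apply: contrapT => /not_orP[Qa Qb].
have [s Ss [q Qq [_ [r ->] Es]]] := Qmax _ Qa.
have [s' Ss' [q' Qq' [_ [r' ->] Es']]] := Qmax _ Qb.
apply: (QS _ (SM _ _ Ss Ss')); rewrite -Es -Es'.
have -> : (q + r * a) * (q' + r' * b) = q * (q' + r' * b) + q' * (r * a) + (r * r') * (a * b).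
  by ring.
have [_ QD QL QR] := HQ.
by apply: (QD); [apply: QD|]; [apply: QR | apply: QR | apply: QL].
Qed.

Lemma prime_idealX P x n : prime_ideal P -> P (x ^+ n) -> P x.
Proof.
case=> _ P1 PM; elim: n => [|n IHn]; first by rewrite expr0.
by rewrite exprS => /PM[].
Qed.

Lemma exists_prime_above I : is_ideal I -> ~ I 1 -> exists2 Q, prime_ideal Q & I `<=` Q.
Proof.
move=> HI I1; have [|Q IQ QI] := @exists_maximal_avoiding [set 1] I HI; first by move=> _ ->.
by exists Q => //; apply: (maximal_avoiding_prime _ _ QI) => // a b -> ->; rewrite mulr1.
Qed.

End PrimeIdeals.

Section LocalizationKernel.
Variable R : comPzRingType.
Implicit Types P Q T : set R.

(* The kernel of the localisation map R -> R_P. *)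
Definition loc_ker P : set R := [set r | exists2 w, ~ P w & w * r = 0].

Lemma is_ideal_loc_ker P : prime_ideal P -> is_ideal (loc_ker P).
Proof.
case=> _ P1 PM; split.
- by exists 1; rewrite ?mulr0.
- move=> x y [w Pw wx] [w' Pw' wy]; exists (w * w'); first by case/PM.
  by rewrite mulrDr mulrAC wx mul0r -mulrA wy mulr0 addr0.
- by move=> r x [w Pw wx]; exists w; rewrite // mulrCA wx mulr0.
- by move=> r x [w Pw wx]; exists w; rewrite // mulrA wx mul0r.
Qed.

Lemma loc_ker_sub P : prime_ideal P -> loc_ker P `<=` P.
Proof.
by case=> -[P0 _ _ _] _ PM x [w Pw wx]; have /PM[] : P (w * x) by rewrite wx.
Qed.

Lemma loc_kerS P Q : P `<=` Q -> loc_ker Q `<=` loc_ker P.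
Proof. by move=> PQ x [w Qw wx]; exists w => // /PQ. Qed.

Lemma fixed_by_loc_ker T Q : is_ideal Q -> ~ Q 1 -> T `<=` Q ->
  fixed_by T `<=` loc_ker Q.
Proof.
move=> HQ Q1 TQ r [t Tt rE]; exists (1 - t); first exact/ideal_1B/TQ.
by rewrite mulrBl mul1r -rE subrr.
Qed.

Lemma minimal_prime_loc_nilpotent P x : minimal_prime P -> P x ->
  exists n, loc_ker P (x ^+ n).
Proof.
case=> -[_ P1 PM] Pmin Px; apply: contrapT => /forallNP noN.
pose S := [set s | exists w n, ~ P w /\ s = w * x ^+ n].
have [|Q _ QS] := @exists_maximal_avoiding _ S _ (@is_ideal0 R).
  by move=> _ [w [n [Pw ->]]] /= wx; apply: (noN n); exists w.
have HQ : prime_ideal Q.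
  apply: (maximal_avoiding_prime _ _ QS); first by exists 1, 0%N; rewrite expr0 mulr1.
  move=> _ _ [w [n [Pw ->]]] [w' [n' [Pw' ->]]]; exists (w * w'), (n + n')%N.
  by split; [case/PM | rewrite exprD mulrACA].
have QP : Q `<=` P.
  move=> y Qy; apply: contrapT => Py; case: QS => _ /(_ y) + _; apply=> //.
  by exists y, 0%N; rewrite expr0 mulr1.
case: QS => _ /(_ x) + _; apply; first by exists 1, 1%N; rewrite expr1 mul1r.
exact: Pmin.
Qed.

Lemma minimal_prime_sub_of_loc_ker P Q : minimal_prime P -> prime_ideal Q ->
  loc_ker P `<=` Q -> P `<=` Q.
Proof.
move=> HP HQ PQ x /(minimal_prime_loc_nilpotent HP)[n /PQ].
exact: prime_idealX.
Qed.

End LocalizationKernel.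


Section MultiplicationRing.
Variable R : comPzRingType.
Hypothesis HR : multiplication_ring R.
Implicit Types A B P Q : set R.

Lemma mul_ring_fixed_by A B : is_ideal A -> is_ideal B ->
  B `<=` ideal_mul B A -> B `<=` fixed_by A.
Proof.
move=> HA HB BBA p Bp.
have [Y [_ EY]] := HR HB (is_ideal_principal p) (principal_sub HB Bp).
have pYB : ideal_mul Y B p by apply/EY/principal_self.
have := ideal_mulA_sub (ideal_mulSS (@subset_refl _ Y) BBA pYB).
move/(ideal_mulSS (fun x => (EY x).2) (@subset_refl _ A)).
by case/(ideal_mul_principal HA) => a Aa ap; exists a.
Qed.

Lemma prime_sub_fixed_by P A a : prime_ideal P -> is_ideal A ->
  P `<=` A -> A a -> ~ P a -> P `<=` fixed_by A.
Proof.
move=> [HP _ PM] HA PA Aa Pa.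
have [X [_ EX]] := HR HA HP PA.
apply: mul_ring_fixed_by => // p /EX; apply: ideal_mulSS => // x Xx.
by have /PM[//|/Pa] : P (x * a) by apply/EX; apply: ideal_mul_prod.
Qed.

Lemma primes_comparable P1 P2 Q : prime_ideal P1 -> prime_ideal P2 ->
  is_ideal Q -> ~ Q 1 -> P1 `<=` Q -> P2 `<=` Q -> P1 `<=` P2 \/ P2 `<=` P1.
Proof.
move=> HP1 HP2 HQ Q1 P1Q P2Q.
have [|/existsNP[x /not_implyP[P1x P2x]]] := pselect (P1 `<=` P2); first by left.
right=> p P2p; have [q Qq pE] := prime_sub_fixed_by HP2 HQ P2Q (P1Q _ P1x) P2x P2p.
have [[P1_0 _ _ _] _ PM] := HP1.
have : P1 ((1 - q) * p) by rewrite mulrBl mul1r -pE subrr.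
by case/PM => // /P1Q/(ideal_1B HQ Q1 Qq).
Qed.

Lemma minimal_prime_below Q : prime_ideal Q -> exists2 P, minimal_prime P & P `<=` Q.
Proof.
move=> HQ; pose G := [set P | prime_ideal P /\ P `<=` Q].
have HG : prime_ideal (\bigcap_(P in G) P).
  apply: prime_ideal_bigcap => [|P1 P2 [HP1 P1Q] [HP2 P2Q]|P []//].
    by exists Q; split.
  by have [HQI Q1 _] := HQ; apply: (primes_comparable HP1 HP2 HQI Q1).
have GQ : \bigcap_(P in G) P `<=` Q by move=> x; apply; split.
exists (\bigcap_(P in G) P) => //; split=> // P HP PG x Gx.
by apply: Gx; split=> // y /PG; apply: GQ.
Qed.

Lemma loc_ker_mono P Q : prime_ideal P -> is_ideal Q -> ~ Q 1 ->
  P `<=` Q -> loc_ker P `<=` loc_ker Q.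
Proof.
move=> HP HQ Q1 PQ.
have [QP|/existsNP[q /not_implyP[Qq Pq]]] := pselect (Q `<=` P); first exact: loc_kerS.
move=> r /(loc_ker_sub HP) /(prime_sub_fixed_by HP HQ PQ Qq Pq).
exact: fixed_by_loc_ker.
Qed.

Lemma eq0_loc_ker_minimal r : (forall P, minimal_prime P -> loc_ker P r) -> r = 0.
Proof.
move=> Hr; have HA : is_ideal [set w | w * r = 0].
  split=> /= [|x y xr yr|s x xr|s x xr]; first exact: mul0r.
  - by rewrite mulrDl xr yr addr0.
  - by rewrite -mulrA xr mulr0.
  - by rewrite mulrAC xr mul0r.
have [/= A1|A1] := pselect (1 * r = 0); first by rewrite -A1 mul1r.
have [Q HQ AQ] := exists_prime_above HA A1.
have [P HP PQ] := minimal_prime_below HQ.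
have [HQI Q1 _] := HQ.
have [w Qw wr] := loc_ker_mono HP.1 HQI Q1 PQ (Hr P HP).
by case: Qw; apply: AQ.
Qed.

Lemma loc_ker_coprime P P' : minimal_prime P -> minimal_prime P' -> P <> P' ->
  ideal_add (loc_ker P) (loc_ker P') 1.
Proof.
move=> HP HP' PP'; apply: contrapT => B1.
have HB := is_ideal_add (is_ideal_loc_ker HP.1) (is_ideal_loc_ker HP'.1).
have [Q HQ BQ] := exists_prime_above HB B1.
have PQ : P `<=` Q.
  apply: minimal_prime_sub_of_loc_ker => // x Px; apply/BQ/ideal_addl => //.
  exact: is_ideal_loc_ker HP'.1.
have P'Q : P' `<=` Q.
  apply: minimal_prime_sub_of_loc_ker => // x Px; apply/BQ/ideal_addr => //.
  exact: is_ideal_loc_ker HP.1.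
have [HQI Q1 _] := HQ.
apply: PP'; apply/seteqP.
case: (primes_comparable HP.1 HP'.1 HQI Q1 PQ P'Q) => [PP'|P'P].
- by split=> //; apply: HP'.2 HP.1 PP'.
- by split=> //; apply: HP.2 HP'.1 P'P.
Qed.

Lemma loc_ker_separate P0 (Ps : nat -> set R) n : minimal_prime P0 ->
  exists2 a, loc_ker P0 a & forall i, (i < n)%N -> minimal_prime (Ps i) ->
    Ps i <> P0 -> loc_ker (Ps i) (1 - a).
Proof.
move=> HP0; have HK := is_ideal_loc_ker HP0.1; have [K0 KD _ KR] := HK.
elim: n => [|n [a Ka Ha]]; first by exists 0.
have [[HPn nP0]|Pn] := pselect (minimal_prime (Ps n) /\ Ps n <> P0); last first.
  exists a => // i; rewrite ltnS leq_eqVlt => /orP[/eqP-> HPn nP0|/Ha//].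
  by case: Pn.
have [a' Ka' [k Kk ak]] := loc_ker_coprime HP0 HPn (nesym nP0).
have [_ _ KnL _] := is_ideal_loc_ker HPn.1.
exists (a + a' - a * a').
  by apply: (ideal_subB HK); [apply: KD | apply: KR].
have -> : 1 - (a + a' - a * a') = (1 - a) * k by rewrite -[k](addKr a') ak; ring.
move=> i; rewrite ltnS leq_eqVlt => /orP[/eqP-> _ _|lt_in HPi nPi]; first exact: KnL.
by have [_ _ _ KiR] := is_ideal_loc_ker HPi.1; apply/KiR/Ha.
Qed.

Lemma exists_annihilator_loc_ker Q : finitely_many_minimal_primes R ->
  prime_ideal Q -> exists2 t, ~ Q t & forall y, loc_ker Q y -> t * y = 0.
Proof.
move=> [n [Ps HPs]] HQ; have [P0 HP0 P0Q] := minimal_prime_below HQ.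
have [a Ka Ha] := loc_ker_separate Ps n HP0.
have [HQI Q1 _] := HQ.
exists (1 - a); first exact/ideal_1B/P0Q/(loc_ker_sub HP0.1).
move=> y Qy; apply: eq0_loc_ker_minimal => P HP.
have [EP0|nP0] := pselect (P = P0).
  by rewrite EP0; have [_ _ KL _] := is_ideal_loc_ker HP0.1; apply/KL/(loc_kerS P0Q).
have [i [lt_in EP]] := HPs P HP.
have {}EP : P = Ps i by rewrite predeqE.
rewrite EP in HP nP0 *.
by have [_ _ _ KR] := is_ideal_loc_ker HP.1; apply/KR/Ha.
Qed.

End MultiplicationRing.

Section ModuleProduct.
Variables (R : comPzRingType) (M : lmodType R).
Implicit Types A B I Q : set R.
Local Notation ideal_smul := (@ideal_smul _ M).

Lemma ideal_smulS I I' : I `<=` I' -> ideal_smul I `<=` ideal_smul I'.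
Proof.
move=> II'; apply: ideal_smul_least; first exact: is_submodule_ideal_smul.
by move=> r v /II'; apply: ideal_smul_gen.
Qed.

Lemma ideal_smul_mul A B : (forall m, ideal_smul B m) ->
  ideal_smul A `<=` ideal_smul (ideal_mul A B).
Proof.
have [S0 SD SZ] := is_submodule_ideal_smul M (ideal_mul A B).
move=> BM; apply: ideal_smul_least; first exact: is_submodule_ideal_smul.
move=> r v Ar.
apply: (@ideal_smul_least _ _ _ [set w | ideal_smul (ideal_mul A B) (r *: w)] _ _ v (BM v)).
  split=> /= [|x y Hx Hy|s x Hx]; first by rewrite scaler0.
  - by rewrite scalerDr; apply: SD.
  - by rewrite scalerA mulrC -scalerA; apply: SZ.
by move=> s w Bs; rewrite /= scalerA; apply: ideal_smul_gen; apply: ideal_mul_prod.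
Qed.

Lemma ideal_smul_annihilated t I (m : M) : (forall r, I r -> t * r = 0) ->
  ideal_smul I m -> t *: m = 0.
Proof.
move=> tI; apply: (@ideal_smul_least _ _ _ [set m : M | t *: m = 0]).
  split=> /= [|x y Hx Hy|s x Hx]; first exact: scaler0.
  - by rewrite scalerDr Hx Hy addr0.
  - by rewrite scalerA mulrC -scalerA Hx scaler0.
by move=> r v Ir; rewrite /= scalerA tI // scale0r.
Qed.

Lemma ideal_smul_ann (m : M) : ideal_smul (ann M) m -> m = 0.
Proof.
apply: (@ideal_smul_least _ _ _ [set 0 : M]); last by move=> r v; apply.
by split=> //= [x y -> ->|s x ->]; rewrite ?addr0 ?scaler0.
Qed.

Lemma is_ideal_ann : is_ideal (ann M).
Proof.
split=> [v|x y Hx Hy v|r x Hx v|r x Hx v]; first exact: scale0r.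
- by rewrite scalerDl Hx Hy addr0.
- by rewrite -scalerA Hx scaler0.
- by rewrite mulrC -scalerA Hx scaler0.
Qed.

Definition cyclic (x : M) : set M := [set y | exists r, y = r *: x].

Lemma is_submodule_cyclic x : is_submodule (cyclic x).
Proof.
split.
- by exists 0; rewrite scale0r.
- by move=> _ _ [r ->] [s ->]; exists (r + s); rewrite scalerDl.
- by move=> c _ [r ->]; exists (c * r); rewrite scalerA.
Qed.

Lemma cyclic_self x : cyclic x x.
Proof. by exists 1; rewrite scale1r. Qed.

Lemma cyclic_eq_ideal_smul x : multiplication_module M ->
  exists2 I, is_ideal I & cyclic x = ideal_smul I.
Proof.
by move=> /(_ _ (is_submodule_cyclic x))[I [HI EI]]; exists I; rewrite // predeqE.
Qed.

Lemma ideal_smul_mul_cyclic I Q x : cyclic x = ideal_smul I -> is_ideal Q ->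
  ideal_smul (ideal_mul I Q) `<=` [set q *: x | q in Q].
Proof.
move=> EI [Q0 QD QL QR]; apply: ideal_smul_least.
  split.
  - by exists 0; rewrite ?scale0r.
  - by move=> _ _ [q Qq <-] [q' Qq' <-]; exists (q + q'); [apply: QD | rewrite scalerDl].
  - by move=> c _ [q Qq <-]; exists (c * q); [apply: QL | rewrite scalerA].
move=> s v Hs; suff : [set s | forall v, [set q *: x | q in Q] (s *: v)] s by apply.
apply: (ideal_mul_least _ _ Hs) => [|i q Ii Qq w].
  split=> [w|a b Ha Hb w|r a Ha w|r a Ha w]; first by exists 0; rewrite ?scale0r.
  - rewrite /= scalerDl; have [q Qq <-] := Ha w; have [q' Qq' <-] := Hb w.
    by exists (q + q'); [apply: QD | rewrite scalerDl].
  - have [q Qq qE] := Ha w.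
    by exists (r * q); [apply: QL | rewrite -!scalerA qE].
  - by have [q Qq qE] := Ha (r *: w); exists q; rewrite // -scalerA.
have : cyclic x (i *: w) by rewrite EI; apply: ideal_smul_gen.
by case=> c cE; exists (q * c); [apply: QR | rewrite (mulrC i) -scalerA -cE scalerA].
Qed.

Lemma efun0 (f : End_R M) : f 0 = 0.
Proof. by rewrite -(scale0r 0) efunZ !scale0r. Qed.

Lemma ideal_smul_efun I (f : End_R M) m : ideal_smul I m -> ideal_smul I (f m).
Proof.
have [S0 SD SZ] := is_submodule_ideal_smul M I.
apply: (@ideal_smul_least _ _ _ [set m | ideal_smul I (f m)]).
  split=> /= [|x y Hx Hy|s x Hx]; first by rewrite efun0.
  - by rewrite efunD; apply: SD.
  - by rewrite efunZ; apply: SZ.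
by move=> r v Ir; rewrite /= efunZ; apply: ideal_smul_gen.
Qed.

End ModuleProduct.

Section ScalarIdeal.
Variables (R : comPzRingType) (M : lmodType R) (f : End_R M).

Definition scalar_ideal : set R :=
  [set t | exists b, forall x : M, f (t *: x) = b *: x].

Lemma is_ideal_scalar_ideal : is_ideal scalar_ideal.
Proof.
split.
- by exists 0 => x; rewrite !scale0r efun0.
- move=> a b [ba Ha] [bb Hb]; exists (ba + bb) => x.
  by rewrite !scalerDl efunD Ha Hb.
- by move=> r a [ba Ha]; exists (r * ba) => x; rewrite -!scalerA efunZ Ha.
- by move=> r a [ba Ha]; exists (ba * r) => x; rewrite -!scalerA Ha.
Qed.

Lemma ann_sub_scalar_ideal : ann M `<=` scalar_ideal.
Proof. by move=> t Ht; exists 0 => x; rewrite Ht efun0 scale0r. Qed.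

Lemma cyclic_sub_scalar_ideal I (x : M) : cyclic x = ideal_smul I -> I `<=` scalar_ideal.
Proof.
move=> EI a Ia.
have [s sE] : cyclic x (f x).
  by rewrite EI; apply: ideal_smul_efun; rewrite -EI; apply: cyclic_self.
exists (s * a) => y.
have [c cE] : cyclic x (a *: y) by rewrite EI; apply: ideal_smul_gen.
by rewrite -scalerA cE efunZ sE !scalerA mulrC.
Qed.

Hypothesis HM : multiplication_module M.

Lemma ideal_smul_scalar_ideal (m : M) : ideal_smul scalar_ideal m.
Proof.
have [I _ EI] := cyclic_eq_ideal_smul m HM.
by apply: (ideal_smulS (cyclic_sub_scalar_ideal EI)); rewrite -EI; apply: cyclic_self.
Qed.

Lemma scalar_ideal_fixes (x : M) : exists2 t, scalar_ideal t & t *: x = x.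
Proof.
have [I _ EI] := cyclic_eq_ideal_smul x HM.
have xIM : ideal_smul I x by rewrite -EI; apply: cyclic_self.
have := ideal_smul_mul ideal_smul_scalar_ideal xIM.
exact: (ideal_smul_mul_cyclic EI is_ideal_scalar_ideal).
Qed.

Hypothesis HR : multiplication_ring R.

Lemma ann_fixed_by_scalar_ideal : ann M `<=` fixed_by scalar_ideal.
Proof.
have [X [_ EX]] := HR is_ideal_scalar_ideal (@is_ideal_ann _ M) ann_sub_scalar_ideal.
have XA : X `<=` ann M.
  move=> x Xx v; apply: ideal_smul_ann; apply: (ideal_smulS (fun r => (EX r).2)).
  exact: ideal_smul_mul ideal_smul_scalar_ideal _ (ideal_smul_gen _ Xx).
apply: (mul_ring_fixed_by HR is_ideal_scalar_ideal (@is_ideal_ann _ M)).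
by move=> r /EX; apply: ideal_mulSS.
Qed.

Lemma cyclic_fixed_by_scalar_ideal I (x : M) : cyclic x = ideal_smul I ->
  I `<=` fixed_by scalar_ideal.
Proof.
move=> EI i Ii; have [t Tt tx] := scalar_ideal_fixes x.
have : ann M ((1 - t) * i).
  move=> v; have [c cE] : cyclic x (i *: v) by rewrite EI; apply: ideal_smul_gen.
  by rewrite -scalerA cE scalerA mulrC -scalerA scalerBl scale1r tx subrr scaler0.
case/ann_fixed_by_scalar_ideal => t' Tt' E.
have [_ TD TL _] := is_ideal_scalar_ideal.
exists (t + t' - t' * t).
  by apply: (ideal_subB is_ideal_scalar_ideal); [apply: TD | apply: TL].
have -> : (t + t' - t' * t) * i = i - ((1 - t) * i - t' * ((1 - t) * i)) by ring.
by rewrite -E subrr subr0.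
Qed.

Hypothesis Hfin : finitely_many_minimal_primes R.

Lemma scalar_ideal1 : scalar_ideal 1.
Proof.
apply: contrapT => T1; have [Q HQ TQ] := exists_prime_above is_ideal_scalar_ideal T1.
have [HQI Q1 _] := HQ.
have [t Qt tQ] := exists_annihilator_loc_ker HR Hfin HQ.
apply/Qt/TQ/ann_sub_scalar_ideal => x; have [I _ EI] := cyclic_eq_ideal_smul x HM.
apply: (ideal_smul_annihilated (I := I)); last by rewrite -EI; apply: cyclic_self.
by move=> r /(cyclic_fixed_by_scalar_ideal EI)/(fixed_by_loc_ker HQI Q1 TQ)/tQ.
Qed.

End ScalarIdeal.

Section ScalarEndomorphism.
Variables (R : comPzRingType) (M : lmodType R).

Lemma scalerAC (r s : R) (x : M) : r *: (s *: x) = s *: (r *: x).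
Proof. by rewrite !scalerA mulrC. Qed.

Definition scalar_endo_fun (r : R) : End_R M := Endo (scalerDr r) (scalerAC r).

Lemma scalar_endo_is_zmod_morphism : zmod_morphism scalar_endo_fun.
Proof. by move=> a b; apply: endo_ext => x /=; rewrite scalerBl. Qed.

Lemma scalar_endo_is_monoid_morphism : monoid_morphism scalar_endo_fun.
Proof.
split=> [|a b]; apply: endo_ext => x /=; first exact: scale1r.
by rewrite scalerA.
Qed.

End ScalarEndomorphism.

HB.instance Definition _ (R : comPzRingType) (M : lmodType R) :=
  GRing.isZmodMorphism.Build R (End_R M) (@scalar_endo_fun R M)
    (@scalar_endo_is_zmod_morphism R M).
HB.instance Definition _ (R : comPzRingType) (M : lmodType R) :=
  GRing.isMonoidMorphism.Build R (End_R M) (@scalar_endo_fun R M)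
    (@scalar_endo_is_monoid_morphism R M).

Definition scalar_endo (R : comPzRingType) (M : lmodType R) :
  {rmorphism R -> End_R M} := @scalar_endo_fun R M.

Section EndomorphismRing.
Variables (R : comPzRingType) (M : lmodType R).

Lemma scalar_endo_eq0 r : scalar_endo M r = 0 <-> ann M r.
Proof.
split=> [E v | Hr]; first by have /= := congr1 (fun g : End_R M => g v) E.
by apply: endo_ext => v /=; rewrite Hr.
Qed.

Lemma scalar_endo_surj : multiplication_ring R -> finitely_many_minimal_primes R ->
  multiplication_module M -> forall g : End_R M, exists r, scalar_endo M r = g.
Proof.
move=> HR Hfin HM g; have [b Hb] := scalar_ideal1 g HM HR Hfin.
by exists b; apply: endo_ext => x /=; rewrite -Hb scale1r.
Qed.

Lemma multiplication_module_End : multiplication_module M ->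
  multiplication_module (M_over_End M).
Proof.
move=> HM N [N0 ND NZ].
have [I [HI EI]] := HM N (And3 N0 ND (fun r => NZ (scalar_endo M r))).
exists [set g : End_R M | forall m, N (g m)]; split.
  split=> [m|g h Ng Nh m|h g Ng m|h g Ng m] //=; first exact: ND.
  exact: NZ h (g m) _.
move=> m; split; last by apply; [exact: (And3 N0 ND NZ) | move=> g v; apply].
move/EI; apply: ideal_smul_least.
  have [S0 SD SZ] := is_submodule_ideal_smul (M_over_End M) [set g | forall m, N (g m)].
  by split=> // r x; apply: (SZ (scalar_endo M r)).
move=> r v Ir; apply: (@ideal_smul_gen _ (M_over_End M) _ (scalar_endo M r)) => w /=.
by apply/EI; apply: ideal_smul_gen.
Qed.

Lemma faithful_End : faithful (M_over_End M).
Proof. by move=> g Hg; apply: endo_ext => x; apply: Hg. Qed.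

End EndomorphismRing.

Theorem corollary2p6 (R : comPzRingType) (M : lmodType R) :
  multiplication_ring R ->
  finitely_many_minimal_primes R ->
  multiplication_module M ->
  [/\ multiplication_ring (End_R M),
      iso_to_quotient (End_R M) (ann M) &
      multiplication_module (M_over_End M) /\ faithful (M_over_End M)].
Proof.
move=> HR Hfin HM; have surj := scalar_endo_surj HR Hfin HM.
split.
- exact: multiplication_ring_surj surj HR.
- by exists (scalar_endo M); split=> // r; apply: scalar_endo_eq0.
- by split; [apply: multiplication_module_End | apply: faithful_End].
Qed.
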